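(* Let $n\ge2$ and let $Q=\begin{pmatrix} M & m\\ m^\top&\mu\end{pmatrix}\in\mathcal{S}^n$ with $M\in\mathcal{S}^{n-1}$, $m\in\mathbb{R}^{n-1}$, $\mu\in\mathbb{R}$, and define its lift $\widetilde Q=\begin{pmatrix} M&m&m\\ m^\top&\mu&\mu\\ m^\top&\mu&\mu\end{pmatrix}\in\mathcal{S}^{n+1}$. If $Q\in(\mathcal{S}^n_{\ge0}+\mathcal{N}^n)\setminus(\mathcal{S}^n_{\ge0}\cup\mathcal{N}^n)$, then $\widetilde Q\in(\mathcal{S}^{n+1}_{\ge0}+\mathcal{N}^{n+1})\setminus(\mathcal{S}^{n+1}_{\ge0}\cup\mathcal{N}^{n+1})$. If $Q\in\mathcal{COP}^n\setminus(\mathcal{S}^n_{\ge0}+\mathcal{N}^n)$, then $\widetilde Q\in\mathcal{COP}^{n+1}\setminus(\mathcal{S}^{n+1}_{\ge0}+\mathcal{N}^{n+1})$.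
   Context: $\mathcal{S}^n$: real symmetric $n\times n$ matrices; $\mathcal{S}^n_{\ge0}$: positive semidefinite ones; $\mathcal{N}^n$: symmetric $n\times n$ matrices with all entries nonnegative; $\mathcal{COP}^n=\{B\in\mathcal{S}^n: x^\top Bx\ge0\ \forall x\in\mathbb{R}^n_{\ge0}\}$. *)

From mathcomp Require Import all_boot all_order all_algebra.
From mathcomp Require Import reals.
Set Implicit Arguments. Unset Strict Implicit. Unset Printing Implicit Defensive.
Import Order.TTheory GRing.Theory Num.Theory.
Local Open Scope ring_scope.

Section Cones.
Variable R : realType.

Definition symmetric_mx n (A : 'M[R]_n) : Prop := A^T = A.

Definition qform n (A : 'M[R]_n) (x : 'cV[R]_n) : R := (x^T *m A *m x) 0 0.

Definition psd n (A : 'M[R]_n) : Prop :=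
  symmetric_mx A /\ forall x : 'cV[R]_n, 0 <= qform A x.

Definition nonneg_mx n (A : 'M[R]_n) : Prop :=
  symmetric_mx A /\ forall i j, 0 <= A i j.

Definition spn n (A : 'M[R]_n) : Prop :=
  exists P N : 'M[R]_n, psd P /\ nonneg_mx N /\ A = P + N.

Definition copositive n (A : 'M[R]_n) : Prop :=
  symmetric_mx A /\
  forall x : 'cV[R]_n, (forall i, 0 <= x i 0) -> 0 <= qform A x.

End Cones.

Definition lift_idx k (i : 'I_k.+2) : 'I_k.+1 := inord (minn i k).

(* the lift  Q~ = [[M,m,m],[m^T,mu,mu],[m^T,mu,mu]]  of Q = [[M,m],[m^T,mu]]:
   the last row and column of Q are duplicated *)
Definition lift_mx (R : Type) k (Q : 'M[R]_k.+1) : 'M[R]_k.+2 :=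
  \matrix_(i, j) Q (lift_idx i) (lift_idx j).

From mathcomp Require Import all_boot all_order all_algebra.
From mathcomp Require Import reals.
Set Implicit Arguments. Unset Strict Implicit. Unset Printing Implicit Defensive.
Import Order.TTheory GRing.Theory Num.Theory.
Local Open Scope ring_scope.

(* For an index map f : [n] -> [m] the principal "reindexing"
   A |-> (A (f i) (f j))_{i,j} equals S^T A S, where S is the 0/1 selection
   matrix with S a j = [a = f j].  Since S maps nonnegative vectors to
   nonnegative vectors, reindexing preserves symmetry, positive
   semidefiniteness, entrywise nonnegativity, membership in S_{>=0} + N and
   copositivity.  The lift of Q is the reindexing of Q along the map
   i |-> min(i, k) collapsing the last two indices, and Q itself is the
   reindexing of its lift along the inclusion [k+1] -> [k+2], which is a
   section of that map.  Hence for each of the four cones, Q belongs to it iff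
   its lift does, and both parts of the theorem follow at once. *)

Section Reindexing.
Variable R : realType.

Definition reindex_mx m n (f : 'I_n -> 'I_m) (A : 'M[R]_m) : 'M[R]_n :=
  \matrix_(i, j) A (f i) (f j).

Definition selection_mx m n (f : 'I_n -> 'I_m) : 'M[R]_(m, n) :=
  \matrix_(a, j) (a == f j)%:R.

Lemma sum_indicator m (F : 'I_m -> R) (x : 'I_m) :
  \sum_a F a * (a == x)%:R = F x.
Proof.
rewrite (bigD1 x) //= eqxx mulr1 big1 ?addr0 // => a /negbTE ->.
by rewrite mulr0.
Qed.

Lemma reindex_mxE m n (f : 'I_n -> 'I_m) (A : 'M[R]_m) :
  reindex_mx f A = (selection_mx f)^T *m A *m selection_mx f.
Proof.
apply/matrixP => i j; rewrite !mxE.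
rewrite (eq_bigr (fun b => A (f i) b * (b == f j)%:R)) ?sum_indicator // => b _.
rewrite !mxE (eq_bigr (fun a => A a b * (a == f i)%:R)) ?sum_indicator //.
by move=> a _; rewrite !mxE mulrC.
Qed.

Lemma qform_reindex m n (f : 'I_n -> 'I_m) (A : 'M[R]_m) (x : 'cV[R]_n) :
  qform (reindex_mx f A) x = qform A (selection_mx f *m x).
Proof. by rewrite /qform reindex_mxE trmx_mul !mulmxA. Qed.

Lemma selection_nonneg m n (f : 'I_n -> 'I_m) (x : 'cV[R]_n) :
  (forall i, 0 <= x i 0) -> forall a, 0 <= (selection_mx f *m x) a 0.
Proof.
move=> x_ge0 a; rewrite mxE; apply: sumr_ge0 => j _.
by rewrite mxE mulr_ge0 ?ler0n.
Qed.

Lemma symmetric_reindex m n (f : 'I_n -> 'I_m) (A : 'M[R]_m) :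
  symmetric_mx A -> symmetric_mx (reindex_mx f A).
Proof. by move=> symA; apply/matrixP => i j; rewrite !mxE -{1}symA mxE. Qed.

Lemma psd_reindex m n (f : 'I_n -> 'I_m) (A : 'M[R]_m) :
  psd A -> psd (reindex_mx f A).
Proof.
case=> symA qA; split; first exact: symmetric_reindex.
by move=> x; rewrite qform_reindex.
Qed.

Lemma nonneg_reindex m n (f : 'I_n -> 'I_m) (A : 'M[R]_m) :
  nonneg_mx A -> nonneg_mx (reindex_mx f A).
Proof.
case=> symA A_ge0; split; first exact: symmetric_reindex.
by move=> i j; rewrite mxE.
Qed.

Lemma spn_reindex m n (f : 'I_n -> 'I_m) (A : 'M[R]_m) :
  spn A -> spn (reindex_mx f A).
Proof.
case=> P [N [psdP [nnN ->]]].
exists (reindex_mx f P), (reindex_mx f N).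
split; first exact: psd_reindex.
split; first exact: nonneg_reindex.
by apply/matrixP => i j; rewrite !mxE.
Qed.

Lemma copositive_reindex m n (f : 'I_n -> 'I_m) (A : 'M[R]_m) :
  copositive A -> copositive (reindex_mx f A).
Proof.
case=> symA copA; split; first exact: symmetric_reindex.
by move=> x x_ge0; rewrite qform_reindex; apply/copA/selection_nonneg.
Qed.

Lemma reindex_section m n (f : 'I_n -> 'I_m) (g : 'I_m -> 'I_n)
  (A : 'M[R]_m) : cancel g f -> reindex_mx g (reindex_mx f A) = A.
Proof. by move=> gK; apply/matrixP => i j; rewrite !mxE !gK. Qed.

Lemma reindex_section_iff (C : forall p, 'M[R]_p -> Prop) m n
  (f : 'I_n -> 'I_m) (g : 'I_m -> 'I_n) (A : 'M[R]_m) :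
  (forall p q (h : 'I_q -> 'I_p) (B : 'M[R]_p), C p B -> C q (reindex_mx h B)) ->
  cancel g f -> C m A <-> C n (reindex_mx f A).
Proof.
move=> C_reindex gK; split; first exact: C_reindex.
by move=> /(C_reindex _ _ g); rewrite reindex_section.
Qed.

End Reindexing.

Lemma lift_idx_section k : cancel (widen_ord (leqnSn k.+1)) (@lift_idx k).
Proof.
move=> i; apply/val_inj; rewrite /lift_idx /= inordK ?ltnS ?geq_minr //.
by apply/minn_idPl; rewrite -ltnS.
Qed.

Lemma lift_mx_reindex (R : realType) k (Q : 'M[R]_k.+1) :
  lift_mx Q = reindex_mx (@lift_idx k) Q.
Proof. by []. Qed.

Lemma lift_mx_iff (R : realType) (C : forall p, 'M[R]_p -> Prop) k
  (Q : 'M[R]_k.+1) :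
  (forall p q (h : 'I_q -> 'I_p) (B : 'M[R]_p), C p B -> C q (reindex_mx h B)) ->
  C k.+1 Q <-> C k.+2 (lift_mx Q).
Proof.
move=> C_reindex; rewrite lift_mx_reindex.
exact: reindex_section_iff (@lift_idx_section k).
Qed.

Theorem lemma5p5 (R : realType) (k : nat) (hk : (1 <= k)%N) (Q : 'M[R]_k.+1)
  (hQ : symmetric_mx Q) :
  ((spn Q /\ ~ psd Q /\ ~ nonneg_mx Q) ->
     (spn (lift_mx Q) /\ ~ psd (lift_mx Q) /\ ~ nonneg_mx (lift_mx Q)))
  /\
  ((copositive Q /\ ~ spn Q) ->
     (copositive (lift_mx Q) /\ ~ spn (lift_mx Q))).
Proof.
have [spnE psdE nnE copE] :
  [/\ spn Q <-> spn (lift_mx Q), psd Q <-> psd (lift_mx Q),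
      nonneg_mx Q <-> nonneg_mx (lift_mx Q)
    & copositive Q <-> copositive (lift_mx Q)].
  split; apply: lift_mx_iff => p q h B.
  - exact: spn_reindex.
  - exact: psd_reindex.
  - exact: nonneg_reindex.
  - exact: copositive_reindex.
by rewrite -spnE -psdE -nnE -copE.
Qed.
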